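(* Let $r_1=(y_1,y_1'),\ r_2=(y_2,y_2')\in\mathbb{N}_0^n\times\mathbb{N}_0^n$ and $r_1\oplus r_2=(y,y')$. Then (i) $y'-y=(y_1'-y_1)+(y_2'-y_2)$; (ii) for every $x\in\mathbb{N}_0^n$: $x\ge y$ if and only if $x\ge y_1$ and $x+(y_1'-y_1)\ge y_2$; (iii) for every $x\in\mathbb{N}_0^n$: $x\ge y'$ if and only if $x\ge y_2'$ and $x+(y_2-y_2')\ge y_1'$. Conversely, if $\odot$ is any binary operation on $\mathbb{N}_0^n\times\mathbb{N}_0^n$ such that for all $r_1,r_2$, writing $r_1\odot r_2=(y,y')$, properties (i) and (ii) hold, or alternatively properties (i) and (iii) hold, then $\odot=\oplus$.
   Context: For $x,y\in\mathbb{Z}^n$, $x\le y$ means $x^i\le y^i$ for all $i$; $x\vee y$ is the componentwise maximum. For $r_1=(y_1,y_1'),\ r_2=(y_2,y_2')\in\mathbb{N}_0^n\times\mathbb{N}_0^n$ define $r_1\oplus r_2=(y,y')$ with $y=y_1+0\vee(y_2-y_1')$ and $y'=y_2'+0\vee(y_1'-y_2)$. *)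

From mathcomp Require Import all_boot all_order all_algebra.
Set Implicit Arguments. Unset Strict Implicit. Unset Printing Implicit Defensive.
Import Order.TTheory GRing.Theory Num.Theory.

Definition vec (n : nat) := {ffun 'I_n -> nat}.

Definition vle n (x y : vec n) : Prop := forall i : 'I_n, (x i <= y i)%N.

(* The operation r1 (+) r2 = (y1 + 0 v (y2 - y1'), y2' + 0 v (y1' - y2)).
   For naturals, 0 v (a - b) (max with 0 of the integer difference) is
   exactly truncated subtraction a - b. *)
Definition oplus n (r1 r2 : vec n * vec n) : vec n * vec n :=
  ([ffun i => r1.1 i + maxn 0 (r2.1 i - r1.2 i)],
   [ffun i => r2.2 i + maxn 0 (r1.2 i - r2.1 i)])%N.

Definition prop_i n (r1 r2 r : vec n * vec n) : Prop :=
  forall i : 'I_n,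
    ((r.2 i)%:Z - (r.1 i)%:Z
     = ((r1.2 i)%:Z - (r1.1 i)%:Z) + ((r2.2 i)%:Z - (r2.1 i)%:Z))%R.

Definition prop_ii n (r1 r2 r : vec n * vec n) : Prop :=
  forall x : vec n,
    vle r.1 x <->
    (vle r1.1 x /\
     forall i : 'I_n, ((r2.1 i)%:Z <= (x i)%:Z + ((r1.2 i)%:Z - (r1.1 i)%:Z))%R).

Definition prop_iii n (r1 r2 r : vec n * vec n) : Prop :=
  forall x : vec n,
    vle r.2 x <->
    (vle r2.2 x /\
     forall i : 'I_n, ((r1.2 i)%:Z <= (x i)%:Z + ((r2.1 i)%:Z - (r2.2 i)%:Z))%R).

From mathcomp Require Import all_boot all_order all_algebra.
From mathcomp Require Import zify.
From Stdlib Require Import FunctionalExtensionality.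
Import Order.TTheory GRing.Theory Num.Theory.

(* On naturals, 0 v (a - b) is truncated subtraction, so coordinate i of
   r1 (+) r2 is (y1 + (y2 - y1'), y2' + (y1' - y2)) with truncated [-].

   Uniqueness rests on two observations:
   - a vector y of N_0^n is determined by its upper set {x | x >= y}
     (antisymmetry of the componentwise order), so (ii) fixes the first
     component y of r1 (.) r2 and (iii) fixes the second component y';
   - given (i), the difference y' - y is fixed, so either component
     determines the other. *)

Section Oplus.

Variable n : nat.
Implicit Types a b x : vec n.

Lemma oplus1E (r1 r2 : vec n * vec n) (i : 'I_n) :
  (oplus r1 r2).1 i = (r1.1 i + (r2.1 i - r1.2 i))%N.
Proof. by rewrite ffunE max0n. Qed.

Lemma oplus2E (r1 r2 : vec n * vec n) (i : 'I_n) :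
  (oplus r1 r2).2 i = (r2.2 i + (r1.2 i - r2.1 i))%N.
Proof. by rewrite ffunE max0n. Qed.

Lemma oplus_prop_i (r1 r2 : vec n * vec n) : prop_i r1 r2 (oplus r1 r2).
Proof. by move=> i; rewrite oplus1E oplus2E; lia. Qed.

Lemma oplus_prop_ii (r1 r2 : vec n * vec n) : prop_ii r1 r2 (oplus r1 r2).
Proof.
move=> x; split=> [le_yx | [le_y1x le_y2]].
- by split=> i; have := le_yx i; rewrite oplus1E; lia.
- by move=> i; have := le_y1x i; have := le_y2 i; rewrite oplus1E; lia.
Qed.

Lemma oplus_prop_iii (r1 r2 : vec n * vec n) : prop_iii r1 r2 (oplus r1 r2).
Proof.
move=> x; split=> [le_yx | [le_y2x le_y1]].
- by split=> i; have := le_yx i; rewrite oplus2E; lia.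
- by move=> i; have := le_y2x i; have := le_y1 i; rewrite oplus2E; lia.
Qed.

Lemma vle_anti a b : vle a b -> vle b a -> a = b.
Proof.
by move=> le_ab le_ba; apply/ffunP => i; apply/eqP; rewrite eqn_leq le_ab le_ba.
Qed.

Lemma upper_set_inj a b : (forall x, vle a x <-> vle b x) -> a = b.
Proof. by move=> eq_up; apply: vle_anti; [apply/eq_up | apply/eq_up]. Qed.

Lemma prop_i_snd {r1 r2 r s : vec n * vec n} :
  prop_i r1 r2 r -> prop_i r1 r2 s -> r.1 = s.1 -> r.2 = s.2.
Proof.
move=> Hr Hs eq1; apply/ffunP => i; have := Hr i; have := Hs i.
rewrite eq1; move: (r.2 i) (s.2 i) (s.1 i) => ri si yi; lia.
Qed.

Lemma prop_i_fst {r1 r2 r s : vec n * vec n} :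
  prop_i r1 r2 r -> prop_i r1 r2 s -> r.2 = s.2 -> r.1 = s.1.
Proof.
move=> Hr Hs eq2; apply/ffunP => i; have := Hr i; have := Hs i.
rewrite eq2; move: (r.1 i) (s.1 i) (s.2 i) => ri si yi; lia.
Qed.

Lemma prop_i_ii_oplus {r1 r2 r : vec n * vec n} :
  prop_i r1 r2 r -> prop_ii r1 r2 r -> r = oplus r1 r2.
Proof.
move=> Hi Hii.
have eq1 : r.1 = (oplus r1 r2).1.
  by apply: upper_set_inj => x; rewrite Hii oplus_prop_ii.
have eq2 := prop_i_snd Hi (oplus_prop_i r1 r2) eq1.
by rewrite [r]surjective_pairing eq1 eq2 -surjective_pairing.
Qed.

Lemma prop_i_iii_oplus {r1 r2 r : vec n * vec n} :
  prop_i r1 r2 r -> prop_iii r1 r2 r -> r = oplus r1 r2.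
Proof.
move=> Hi Hiii.
have eq2 : r.2 = (oplus r1 r2).2.
  by apply: upper_set_inj => x; rewrite Hiii oplus_prop_iii.
have eq1 := prop_i_fst Hi (oplus_prop_i r1 r2) eq2.
by rewrite [r]surjective_pairing eq1 eq2 -surjective_pairing.
Qed.

End Oplus.

Theorem proposition2p4 (n : nat) :
  (forall r1 r2 : vec n * vec n,
      prop_i r1 r2 (oplus r1 r2) /\ prop_ii r1 r2 (oplus r1 r2)
      /\ prop_iii r1 r2 (oplus r1 r2)) /\
  (forall odot : vec n * vec n -> vec n * vec n -> vec n * vec n,
      ((forall r1 r2, prop_i r1 r2 (odot r1 r2) /\ prop_ii r1 r2 (odot r1 r2)) \/
       (forall r1 r2, prop_i r1 r2 (odot r1 r2) /\ prop_iii r1 r2 (odot r1 r2))) ->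
      odot = @oplus n).
Proof.
split=> [r1 r2 | odot Hodot].
  by split; [exact: oplus_prop_i | split; [exact: oplus_prop_ii | exact: oplus_prop_iii]].
apply: functional_extensionality => r1; apply: functional_extensionality => r2.
case: Hodot => H; have [Hi H'] := H r1 r2.
- exact: prop_i_ii_oplus Hi H'.
- exact: prop_i_iii_oplus Hi H'.
Qed.
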